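(* $URD(12;K_2,S(C_3))\supseteq J(12)=\{(3,4),(7,2),(11,0)\}$; that is, for each $(r,s)\in\{(3,4),(7,2),(11,0)\}$ there exists a partition of the edge set of $K_{12}$ into $r$ 1-factors and $s$ classes each consisting of two vertex-disjoint 3-suns covering all twelve vertices.
   Context: A 3-sun is the graph on $6$ distinct vertices $a_1,a_2,a_3,b_1,b_2,b_3$ consisting of the triangle $(a_1,a_2,a_3)$ together with the edges $\{a_i,b_i\}$, $i=1,2,3$. $URD(v;K_2,S(C_3))$ denotes the set of pairs $(r,s)$ such that the edge set of $K_v$ can be partitioned into $r$ 1-factors and $s$ classes each of which is a set of vertex-disjoint 3-suns covering every vertex exactly once. *)

From mathcomp Require Import all_boot.
Set Implicit Arguments. Unset Strict Implicit. Unset Printing Implicit Defensive.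

(* Vertices of K_v are 'I_v; an edge is a 2-element subset of 'I_v. *)
Definition is_edge v (e : {set 'I_v}) : bool := #|e| == 2.

Definition one_factor v (F : {set {set 'I_v}}) : Prop :=
  (forall e, e \in F -> is_edge e) /\
  (forall x : 'I_v, #|[set e in F | x \in e]| = 1).

Definition sun_vertices v (a1 a2 a3 b1 b2 b3 : 'I_v) : {set 'I_v} :=
  [set a1; a2; a3; b1; b2; b3].
Definition sun_edges v (a1 a2 a3 b1 b2 b3 : 'I_v) : {set {set 'I_v}} :=
  [set [set a1; a2]; [set a2; a3]; [set a1; a3];
       [set a1; b1]; [set a2; b2]; [set a3; b3]].

Definition is_sun v (S : {set 'I_v} * {set {set 'I_v}}) : Prop :=
  exists a1 a2 a3 b1 b2 b3 : 'I_v,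
    uniq [:: a1; a2; a3; b1; b2; b3] /\
    S = (sun_vertices a1 a2 a3 b1 b2 b3, sun_edges a1 a2 a3 b1 b2 b3).

Definition sun_class v (C : {set {set 'I_v}}) : Prop :=
  exists suns : seq ({set 'I_v} * {set {set 'I_v}}),
    (forall S, S \in suns -> is_sun S) /\
    (forall x : 'I_v, count (fun S : {set 'I_v} * {set {set 'I_v}} => x \in S.1) suns = 1) /\
    C = \bigcup_(S <- suns) S.2.

Definition URD v (r s : nat) : Prop :=
  exists (Fs Cs : seq {set {set 'I_v}}),
    size Fs = r /\ size Cs = s /\
    (forall F, F \in Fs -> one_factor F) /\
    (forall C, C \in Cs -> sun_class C) /\
    (forall e : {set 'I_v}, is_edge e ->
       count (fun K : {set {set 'I_v}} => e \in K) (Fs ++ Cs) = 1) /\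
    (forall K e, K \in Fs ++ Cs -> e \in K -> is_edge e).

From mathcomp Require Import all_boot.
Set Implicit Arguments. Unset Strict Implicit. Unset Printing Implicit Defensive.

(* All three decompositions are given explicitly, as certificates: a 1-factor
   is a list of vertex pairs, a sun-class a list of vertex lists
   [a1; a2; a3; b1; b2; b3].  A boolean checker on certificates is proved
   sound for every order v, and the three certificates are checked by
   evaluation. *)

Lemma in_bigcup_seq (T : finType) (I : Type) (r : seq I) (F : I -> {set T}) x :
  (x \in \bigcup_(i <- r) F i) = has (fun i => x \in F i) r.
Proof. by elim: r => [|i r IHr]; rewrite ?big_nil ?big_cons ?inE //= IHr. Qed.

Section Certificates.

Variable n : nat.
Local Notation v := n.+1.
Implicit Types (x y : 'I_v) (p : 'I_v * 'I_v) (s : seq 'I_v).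

(* Unlike [ord_enum], whose membership proofs go through the opaque [idP],
   this enumeration reduces under [vm_compute]. *)
Definition ord_mod m : 'I_v := Ordinal (ltn_pmod m (ltn0Sn n)).

Definition vertices := map ord_mod (iota 0 v).

Lemma mem_vertices x : x \in vertices.
Proof.
apply/mapP; exists (val x); first by rewrite mem_iota ltn_ord.
by apply: val_inj; rewrite /= modn_small.
Qed.

Definition joins p x y := ((x == p.1) && (y == p.2)) || ((x == p.2) && (y == p.1)).

Definition edge_of p : {set 'I_v} := [set p.1; p.2].

Lemma eq_set2 x y a b : x != y -> ([set x; y] == [set a; b]) = joins (a, b) x y.
Proof.
move=> neq_xy; apply/eqP/idP => [E|]; last first.
  by case/orP=> /andP[/eqP-> /eqP->]; rewrite // setUC.
have: x \in [set a; b] by rewrite -E !inE eqxx.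
have: y \in [set a; b] by rewrite -E !inE eqxx orbT.
rewrite !inE => /orP[]/eqP yE /orP[]/eqP xE;
  by move: neq_xy; rewrite /joins xE yE !eqxx ?orbT.
Qed.

Lemma edge_of_is_edge p : p.1 != p.2 -> is_edge (edge_of p).
Proof. by move=> neq_p; rewrite /is_edge cards2 neq_p. Qed.

Definition factor_of (l : seq ('I_v * 'I_v)) : {set {set 'I_v}} := edge_of @: l.

Lemma mem_factor_of l e : (e \in factor_of l) = has (fun p => e == edge_of p) l.
Proof.
apply/imsetP/hasP => [[p lp ->]|[p lp /eqP ->]]; last by exists p.
by exists p; rewrite ?eqxx.
Qed.

Definition sun_of s :=
  let a := nth ord0 s in
  (sun_vertices (a 0) (a 1) (a 2) (a 3) (a 4) (a 5),
   sun_edges (a 0) (a 1) (a 2) (a 3) (a 4) (a 5)).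

Definition sun_pairs s :=
  let a := nth ord0 s in
  [:: (a 0, a 1); (a 1, a 2); (a 0, a 2); (a 0, a 3); (a 1, a 4); (a 2, a 5)].

Definition class_of (c : seq (seq 'I_v)) : {set {set 'I_v}} :=
  \bigcup_(S <- map sun_of c) S.2.

Lemma mem_sun_edges x y s : x != y ->
  ([set x; y] \in (sun_of s).2) = has (fun p => joins p x y) (sun_pairs s).
Proof. by move=> neq_xy; rewrite !inE !(eq_set2 _ _ neq_xy) /= -!orbA orbF. Qed.

Lemma sun_edges_are_edges s e : size s = 6 -> uniq s ->
  e \in (sun_of s).2 -> is_edge e.
Proof.
case: s => [|a1 [|a2 [|a3 [|b1 [|b2 [|b3 [|]]]]]]] //= _.
rewrite !inE !negb_or.
case/andP=> /and5P[n12 n13 n14 _ _] /andP[/and4P[n23 _ n25 _]] /andP[/and3P[_ _ n36] _].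
rewrite -!orbA => /or4P[|||/or3P[||]] /eqP->;
  by rewrite /is_edge cards2 ?n12 ?n23 ?n13 ?n14 ?n25 ?n36.
Qed.

Lemma sun_of_is_sun s : size s = 6 -> uniq s -> is_sun (sun_of s).
Proof.
case: s => [|a1 [|a2 [|a3 [|b1 [|b2 [|b3 [|]]]]]]] //= _ U.
by exists a1, a2, a3, b1, b2, b3.
Qed.

Lemma mem_sun_vertices x s : size s = 6 -> (x \in (sun_of s).1) = (x \in s).
Proof.
by case: s => [|a1 [|a2 [|a3 [|b1 [|b2 [|b3 [|]]]]]]] //= _; rewrite !inE -!orbA.
Qed.

Definition factor_ok (l : seq ('I_v * 'I_v)) :=
  all (fun p => p.1 != p.2) l &&
  all (fun x => count (fun p => (x == p.1) || (x == p.2)) l == 1) vertices.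

Definition class_ok (c : seq (seq 'I_v)) :=
  all (fun s => (size s == 6) && uniq s) c &&
  all (fun x => count (fun s => x \in s) c == 1) vertices.

Definition partition_ok fs cs :=
  all (fun x => all (fun y => (x != y) ==>
    (count (has (fun p => joins p x y)) fs +
     count (has (fun s => has (fun p => joins p x y) (sun_pairs s))) cs == 1))
  vertices) vertices.

Definition certificate_ok fs cs :=
  [&& partition_ok fs cs, all factor_ok fs & all class_ok cs].

Lemma factor_of_one_factor l : factor_ok l -> one_factor (factor_of l).
Proof.
case/andP=> /allP neq_l /allP count_l; split.
  by move=> e; rewrite mem_factor_of => /hasP[p /neq_l ? /eqP->]; apply: edge_of_is_edge.
move=> x; have := count_l x (mem_vertices x).
rewrite -size_filter; set xs := filter _ l.
case Exs: xs => [|p0 []] //= _.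
have: p0 \in xs by rewrite Exs mem_head.
rewrite mem_filter -in_set2 => /andP[x_p0 l_p0].
suff ->: [set e in factor_of l | x \in e] = [set edge_of p0] by rewrite cards1.
apply/setP=> e; rewrite !inE mem_factor_of.
apply/andP/eqP => [[/hasP[p l_p /eqP ->] x_p]|->]; last first.
  by split=> //; apply/hasP; exists p0.
have: p \in xs by rewrite mem_filter -in_set2 x_p l_p.
by rewrite Exs inE => /eqP->.
Qed.

Lemma class_of_sun_class c : class_ok c -> sun_class (class_of c).
Proof.
case/andP=> /allP suns_c /allP count_c; exists (map sun_of c); split; last split => //.
  by move=> S /mapP[s /suns_c /andP[/eqP size_s uniq_s] ->]; apply: sun_of_is_sun.
move=> x; apply/eqP; rewrite count_map -(eqP (count_c x (mem_vertices x))).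
apply/eqP/eq_in_count => s /suns_c /andP[/eqP size_s _] /=.
exact: mem_sun_vertices.
Qed.

Lemma URD_of_certificate fs cs :
  certificate_ok fs cs -> URD v (size fs) (size cs).
Proof.
case/and3P=> /allP part /allP factors_ok /allP classes_ok.
exists (map factor_of fs), (map class_of cs); rewrite !size_map; do 2!split=> //.
split; first by move=> F /mapP[l /factors_ok ? ->]; apply: factor_of_one_factor.
split; first by move=> C /mapP[c /classes_ok ? ->]; apply: class_of_sun_class.
split=> [e /cards2P[x [y [neq_xy ->]]]|K e].
  have /allP/(_ y (mem_vertices y)) := part x (mem_vertices x).
  rewrite neq_xy /= count_cat !count_map => /eqP <-; congr (_ + _).
    by apply: eq_count => l /=; rewrite mem_factor_of; apply: eq_has => -[a b]; rewrite eq_set2.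
  apply: eq_count => c /=; rewrite /class_of in_bigcup_seq has_map.
  by apply: eq_has => s; rewrite /= mem_sun_edges.
rewrite mem_cat => /orP[] /mapP[d d_in ->].
  rewrite mem_factor_of => /hasP[p p_in /eqP->]; apply: edge_of_is_edge.
  by have /andP[/allP neq_d _] := factors_ok d d_in; apply: neq_d.
rewrite /class_of in_bigcup_seq has_map => /hasP[s s_in].
have /andP[/allP suns_d _] := classes_ok d d_in.
by case/andP: (suns_d s s_in) => /eqP; apply: sun_edges_are_edges.
Qed.

End Certificates.

Definition factors12 (fs : seq (seq (nat * nat))) : seq (seq ('I_12 * 'I_12)) :=
  map (map (fun p => (ord_mod 11 p.1, ord_mod 11 p.2))) fs.
Definition classes12 (cs : seq (seq (seq nat))) : seq (seq (seq 'I_12)) :=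
  map (map (map (ord_mod 11))) cs.

Definition factors_3_4 := [::
  [:: (0, 3); (1, 2); (4, 8); (5, 10); (6, 11); (7, 9)];
  [:: (0, 10); (1, 4); (2, 7); (3, 11); (5, 6); (8, 9)];
  [:: (0, 7); (1, 11); (2, 3); (4, 6); (5, 8); (9, 10)]].
Definition classes_3_4 := [::
  [:: [:: 9; 5; 11; 0; 2; 4]; [:: 6; 7; 3; 1; 10; 8]];
  [:: [:: 11; 0; 8; 7; 1; 2]; [:: 9; 4; 3; 6; 10; 5]];
  [:: [:: 8; 10; 1; 6; 3; 9]; [:: 4; 0; 2; 7; 5; 11]];
  [:: [:: 10; 2; 6; 11; 9; 0]; [:: 7; 5; 1; 8; 4; 3]]].

Definition factors_7_2 := [::
  [:: (0, 8); (1, 6); (2, 10); (3, 9); (4, 11); (5, 7)];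
  [:: (0, 6); (1, 3); (2, 8); (4, 10); (5, 9); (7, 11)];
  [:: (0, 7); (1, 4); (2, 5); (3, 10); (6, 11); (8, 9)];
  [:: (0, 4); (1, 2); (3, 11); (5, 8); (6, 10); (7, 9)];
  [:: (0, 9); (1, 11); (2, 6); (3, 5); (4, 8); (7, 10)];
  [:: (0, 3); (1, 7); (2, 9); (4, 6); (5, 10); (8, 11)];
  [:: (0, 10); (1, 8); (2, 11); (3, 7); (4, 9); (5, 6)]].
Definition classes_7_2 := [::
  [:: [:: 0; 5; 11; 2; 1; 9]; [:: 6; 7; 8; 3; 4; 10]];
  [:: [:: 1; 10; 9; 0; 11; 6]; [:: 4; 2; 3; 5; 7; 8]]].

(* The classical 1-factorization GK_12 of K_12 on Z_11 + {11}: the i-th factor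
   is {11, i} together with the pairs {i + j, i - j} for j = 1..5. *)
Definition factors_11_0 :=
  [seq (11, i) :: [seq ((i + j) %% 11, (i + 11 - j) %% 11) | j <- iota 1 5]
  | i <- iota 0 11].

Theorem lemma3p2 : URD 12 3 4 /\ URD 12 7 2 /\ URD 12 11 0.
Proof.
split; [|split].
- apply: (@URD_of_certificate 11 (factors12 factors_3_4) (classes12 classes_3_4)).
  by vm_compute.
- apply: (@URD_of_certificate 11 (factors12 factors_7_2) (classes12 classes_7_2)).
  by vm_compute.
- apply: (@URD_of_certificate 11 (factors12 factors_11_0) [::]).
  by vm_compute.
Qed.
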